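(* Let $\vec k=(k_1,\dots,k_\ell)$ be a vector of positive integers and let $F$ be a tableau filled bijectively with the labels $1,2,\dots,|\vec k|+\ell$, with $\ell$ top-justified columns, the $i$-th column containing $k_i+1$ entries, such that the entries of the first row increase from left to right and each column increases from top to bottom. Then $F=\eta_*(\pi)$ for some $\pi\in\mathcal{D}_{\vec k}$ if and only if for every pair of entries $a,d$ with $d$ immediately below $a$ in $F$ and $a<d-1$, the set of labels $\{a+1,a+2,\dots,d-1\}$ is a union of entire columns of $F$.
   Context: $|\vec k|=k_1+\cdots+k_\ell$, $N=|\vec k|+\ell$. A $\vec k$-Dyck path is a word $\pi=\pi_1\cdots\pi_N$ containing the letters $S^{k_1},\dots,S^{k_\ell}$ exactly once each and in this order, together with $|\vec k|$ letters $W$, such that all starting ranks are nonnegative, where $r_1=0$, $r_{i+1}=r_i+k_j$ if $\pi_i=S^{k_j}$ and $r_{i+1}=r_i-1$ if $\pi_i=W$. $\mathcal D_{\vec k}$ is the set of such paths. Filling algorithm $\eta_*$: in a tableau of $\ell$ top-justified columns, column $i$ having $k_i+1$ cells, place $1$ at the top of column 1; for $i=2,\dots,N$, call an entry active if it is currently the bottom entry of a column $i'$ not yet containing $k_{i'}+1$ entries; if $\pi_i=W$ place $i$ immediately below the largest active entry, otherwise place $i$ at the top of the first empty column. The resulting tableau is $\eta_*(\pi)$. *)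

From mathcomp Require Import all_boot all_order all_algebra.
Set Implicit Arguments. Unset Strict Implicit. Unset Printing Implicit Defensive.
Import GRing.Theory Num.Theory.

(* Letters of a k-Dyck path: [None] is W, [Some j] is S^{k_{j+1}}
   (column index j is 0-based). *)
Definition letter := option nat.

Definition kstep (k : seq nat) (x : letter) : int :=
  match x with None => (-1)%R | Some j => ((nth 0 k j)%:Z)%R end.

Definition rank (k : seq nat) (w : seq letter) : int :=
  (\sum_(x <- w) kstep k x)%R.

Definition dyck (k : seq nat) (p : seq letter) : Prop :=
  [/\ pmap id p = iota 0 (size k),            (* S^{k_1},...,S^{k_l} once each, in order *)
      count (pred1 None) p = sumn k
    & forall i, i < size p -> (0 <= rank k (take i p))%R ].

(* ---- the filling algorithm eta_* ----
   A tableau is a list of columns, each column listed top to bottom. *)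
Definition is_active (kc : nat * seq nat) : bool :=
  (0 < size kc.2) && (size kc.2 < kc.1.+1).

Definition actives (k : seq nat) (cols : seq (seq nat)) : seq nat :=
  [seq last 0 kc.2 | kc <- zip k cols & is_active kc].

Definition place_top (i : nat) (cols : seq (seq nat)) : option (seq (seq nat)) :=
  let j := find (fun c => c == [::]) cols in
  if j < size cols then Some (set_nth [::] cols j [:: i]) else None.

Definition place_below (k : seq nat) (i : nat) (cols : seq (seq nat))
  : option (seq (seq nat)) :=
  let A := actives k cols in
  if A is [::] then None else
  let m := \max_(x <- A) x in
  let j := find (fun kc => is_active kc && (last 0 kc.2 == m)) (zip k cols) in
  Some (set_nth [::] cols j (rcons (nth [::] cols j) i)).

Fixpoint run (k : seq nat) (w : seq letter) (i : nat) (cols : seq (seq nat))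
  : option (seq (seq nat)) :=
  match w with
  | [::] => Some cols
  | x :: w' =>
      match (if x is None then place_below k i cols else place_top i cols) with
      | Some cols' => run k w' i.+1 cols'
      | None => None
      end
  end.

(* eta_* (pi): [None] if the algorithm gets stuck. Label 1 goes to the top of
   column 1 (the first empty column of the initially empty tableau). *)
Definition eta (k : seq nat) (p : seq letter) : option (seq (seq nat)) :=
  let cols0 := nseq (size k) [::] in
  match p with
  | [::] => Some cols0
  | _ :: w => match place_top 1 cols0 with
              | Some c => run k w 2 c
              | None => None
              end
  end.

Definition is_tableau (k : seq nat) (F : seq (seq nat)) : Prop :=
  [/\ size F = size k,
      forall i, i < size k -> size (nth [::] F i) = (nth 0 k i).+1,
      perm_eq (flatten F) (iota 1 (sumn k + size k)),
      sorted ltn (map (head 0) F)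
    & all (sorted ltn) F].

Definition gap_condition (F : seq (seq nat)) : Prop :=
  forall c, c \in F -> forall r, r.+1 < size c ->
    let a := nth 0 c r in let d := nth 0 c r.+1 in
    a < d.-1 ->
    exists cols : seq (seq nat),
      {subset cols <= F} /\
      forall x, (a < x < d) = has (fun c' => x \in c') cols.

From mathcomp Require Import all_boot all_order all_algebra zify.
Set Implicit Arguments. Unset Strict Implicit. Unset Printing Implicit Defensive.

(* The filling is replayed on the snapshots of F, i.e. F restricted to the labels below d:
   eta_*(pi) = F exactly when, for every d, the d-th letter turns the snapshot at d into the
   one at d + 1.  If d sits directly below a in F, that step must put d under the largest
   active entry, so every started but unfinished column has its current bottom entry <= a.
   Hence eta_*(pi) = F forces, and with pi reading S exactly at the column heads is realised
   by, the nesting condition: a column with an entry in the gap (a, d) ends before d.  Such a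
   column also starts after a: otherwise a lies in one of its gaps (p, q) with q <= d, and
   the column of a, which reaches d, violates nesting.  So nesting is the gap condition.
   Finally pi is a Dyck path: after i letters its rank is the total size of the columns
   started so far minus i, and these columns contain every label up to i. *)

Lemma sorted_nth_ltn (s : seq nat) i j : sorted ltn s -> i < j -> j < size s ->
  nth 0 s i < nth 0 s j.
Proof.
move=> s_sorted ij js; apply: (sorted_ltn_nth ltn_trans 0 s_sorted) => //.
by rewrite inE (ltn_trans ij).
Qed.

Lemma sorted_nth_leq (s : seq nat) i j : sorted ltn s -> i <= j -> j < size s ->
  nth 0 s i <= nth 0 s j.
Proof.
move=> s_sorted; rewrite leq_eqVlt => /orP [/eqP -> // | ij js].
exact/ltnW/sorted_nth_ltn.
Qed.

Lemma head_leq_sorted (s : seq nat) y : sorted ltn s -> y \in s -> head 0 s <= y.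
Proof. by move=> s_sorted /(nthP 0) [t ts <-]; rewrite -nth0 sorted_nth_leq. Qed.

Lemma leq_last_sorted (s : seq nat) y : sorted ltn s -> y \in s -> y <= last 0 s.
Proof.
move=> s_sorted /(nthP 0) [t ts <-]; rewrite -nth_last sorted_nth_leq //.
  by rewrite -ltnS (ltn_predK ts).
by rewrite (ltn_predK ts).
Qed.

Lemma sorted_adjacent (s : seq nat) r y : sorted ltn s -> r.+1 < size s -> y \in s ->
  (y <= nth 0 s r) || (nth 0 s r.+1 <= y).
Proof.
move=> s_sorted rs /(nthP 0) [t ts <-].
case: (leqP t r) => tr; first by rewrite sorted_nth_leq // ltnW.
by rewrite [_ <= nth 0 s t]sorted_nth_leq ?orbT.
Qed.

Lemma mem_last_nonnil (T : eqType) (x0 y : T) (s : seq T) : y \in s -> last x0 s \in s.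
Proof. by case: s => // z s _ /=; exact: mem_last. Qed.

Lemma last_filter_ltn_nth (s : seq nat) r : sorted ltn s -> r.+1 < size s ->
  last 0 [seq x <- s | x < nth 0 s r.+1] = nth 0 s r.
Proof.
move=> s_sorted rs; set f := filter _ s.
have af : nth 0 s r \in f by rewrite mem_filter sorted_nth_ltn // mem_nth // ltnW.
have f_sorted : sorted ltn f by apply: sorted_filter => //; exact: ltn_trans.
move: (mem_last_nonnil 0 af); rewrite mem_filter.
case/andP=> lt_last /(sorted_adjacent s_sorted rs).
rewrite [nth 0 s r.+1 <= _]leqNgt lt_last orbF => le_last.
by apply/eqP; rewrite eqn_leq le_last leq_last_sorted.
Qed.

Lemma filter_eq_nil (T : eqType) (p : pred T) (s : seq T) :
  {in s, forall x, ~~ p x} -> filter p s = [::].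
Proof. by move/hasPn; rewrite has_filter negbK => /eqP. Qed.

Lemma filter_ltnS_sorted (s : seq nat) d : sorted ltn s -> d \in s ->
  [seq x <- s | x < d.+1] = rcons [seq x <- s | x < d] d.
Proof.
elim: s => // a s IH as_sorted; rewrite inE.
have /allP a_min := order_path_min ltn_trans as_sorted.
case: eqVneq => [-> _ | da ds] /=.
  by rewrite ltnSn ltnn !filter_eq_nil // => y /a_min ay; rewrite -leqNgt // ltnW.
have ad : a < d by exact: a_min.
by rewrite ad ltnW // IH //; exact: path_sorted as_sorted.
Qed.

Lemma sorted_straddle (s : seq nat) x y a : sorted ltn s -> x \in s -> y \in s ->
  x < a < y -> a \notin s ->
  exists2 r, r.+1 < size s & [&& nth 0 s r < a, a < nth 0 s r.+1 & nth 0 s r.+1 <= y].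
Proof.
move=> s_sorted xs /(nthP 0) [t ts <-] /andP [xa ay] na.
set r1 := find (fun z => a < z) s.
have has_gt : has (fun z => a < z) s by apply/(has_nthP 0); exists t.
have r1s : r1 < size s by rewrite -has_find.
have a_r1 : a < nth 0 s r1 := nth_find 0 has_gt.
have r1t : r1 <= t by rewrite leqNgt; apply/negP => /(before_find 0); rewrite ay.
have r1_gt0 : 0 < r1.
  rewrite lt0n; apply: contraTneq a_r1 => ->; rewrite nth0 -leqNgt.
  exact: leq_trans (head_leq_sorted s_sorted xs) (ltnW xa).
have r1'_lt : r1.-1 < r1 by rewrite ltn_predL.
have r1'_ne : nth 0 s r1.-1 != a.
  by apply: contraNneq na => <-; rewrite mem_nth // (ltn_trans r1'_lt).
exists r1.-1; rewrite prednK // a_r1 sorted_nth_leq // andbT.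
by rewrite ltn_neqAle r1'_ne leqNgt (before_find 0 r1'_lt).
Qed.

Lemma uniq_flatten_nth_inj (T : eqType) (ss : seq (seq T)) i j x :
  uniq (flatten ss) -> x \in nth [::] ss i -> x \in nth [::] ss j -> i = j.
Proof.
elim: ss i j => [|s ss IH] [|i] [|j] //=; rewrite ?nth_nil // cat_uniq.
- case/and3P=> _ /hasP dis _ xs xj; case: dis; exists x => //; apply/flattenP.
  by exists (nth [::] ss j) => //; apply: mem_nth; case: ltnP xj => // ?; rewrite nth_default.
- case/and3P=> _ /hasP dis _ xi xs; case: dis; exists x => //; apply/flattenP.
  by exists (nth [::] ss i) => //; apply: mem_nth; case: ltnP xi => // ?; rewrite nth_default.
- by case/and3P=> _ _ uss xi xj; congr _.+1; exact: IH xi xj.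
Qed.

Lemma find_nth_first (T : Type) (P : pred T) (s : seq T) x0 j : j < size s ->
  P (nth x0 s j) -> (forall i, i < j -> ~~ P (nth x0 s i)) -> find P s = j.
Proof.
move=> js Pj notP; have Ps : has P s by apply/(has_nthP x0); exists j.
case: (ltngtP (find P s) j) => // [/notP | /(before_find x0)]; last by rewrite Pj.
by rewrite nth_find.
Qed.

Lemma mem_bigmax_seq (A : seq nat) : A != [::] -> \max_(x <- A) x \in A.
Proof.
elim: A => // a A IH _; rewrite big_cons inE.
case: A IH => [|b A] IH; first by rewrite big_nil maxn0 eqxx.
by have := IH isT; rewrite /maxn; case: ifP => _ h; rewrite ?h ?orbT ?eqxx.
Qed.

(* The state of the filling just before label d is placed. *)
Definition restrict (G : seq (seq nat)) (d : nat) : seq (seq nat) :=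
  map (filter (fun x => x < d)) G.

Lemma size_restrict G d : size (restrict G d) = size G.
Proof. exact: size_map. Qed.

Lemma nth_restrict G d j : nth [::] (restrict G d) j = [seq x <- nth [::] G j | x < d].
Proof.
case: (ltnP j (size G)) => jG; first by rewrite (nth_map [::]).
by rewrite !nth_default ?size_map.
Qed.

Lemma restrict_restrict G m n : restrict (restrict G m) n = restrict G (minn m n).
Proof.
rewrite /restrict -map_comp; apply: eq_map => c /=; rewrite -filter_predI.
by apply: eq_filter => x /=; rewrite leq_min andbC.
Qed.

Section FillingSteps.
Variable k : seq nat.
Implicit Types (cols G : seq (seq nat)) (i d j : nat).

Lemma activesP cols y : y \in actives k cols ->
  exists2 j, j < minn (size k) (size cols) &
    is_active (nth 0 k j, nth [::] cols j) /\ y = last 0 (nth [::] cols j).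
Proof.
case/mapP=> kc; rewrite mem_filter => /andP [act /(nthP (0, [::])) [j]].
rewrite size_zip nth_zip_cond => jk ekc ->; move: act; rewrite -ekc size_zip jk => act.
by exists j.
Qed.

Lemma mem_actives cols j : j < minn (size k) (size cols) ->
  is_active (nth 0 k j, nth [::] cols j) -> last 0 (nth [::] cols j) \in actives k cols.
Proof.
move=> jk act; apply/mapP; exists (nth 0 k j, nth [::] cols j) => //.
have := @mem_nth _ (0, [::]) (zip k cols) j; rewrite size_zip nth_zip_cond size_zip jk.
by rewrite mem_filter act => ->.
Qed.

Lemma actives_nil n : actives k (nseq n [::]) = [::].
Proof. by rewrite /actives; elim: k n => [|a k' IH] [|n] //=. Qed.

Lemma place_topP i cols cols' : place_top i cols = Some cols' ->
  exists2 j, j < size cols & nth [::] cols j = [::] /\ cols' = set_nth [::] cols j [:: i].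
Proof.
rewrite /place_top; case: ifP => // js [<-]; exists (find (fun c => c == [::]) cols) => //.
by split=> //; apply/eqP; apply: (@nth_find _ [::] (fun c => c == [::])); rewrite has_find.
Qed.

Lemma place_topE i cols j : j < size cols -> nth [::] cols j = [::] ->
  (forall j', j' < j -> nth [::] cols j' != [::]) ->
  place_top i cols = Some (set_nth [::] cols j [:: i]).
Proof.
move=> js colj before; rewrite /place_top (@find_nth_first _ _ _ [::] j) ?js //.
by rewrite colj.
Qed.

Lemma place_belowP i cols cols' : place_below k i cols = Some cols' ->
  exists2 j, j < minn (size k) (size cols) &
    [/\ is_active (nth 0 k j, nth [::] cols j),
        {in actives k cols, forall y, y <= last 0 (nth [::] cols j)} &
        cols' = set_nth [::] cols j (rcons (nth [::] cols j) i)].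
Proof.
rewrite /place_below; case A: (actives k cols) => [|a A'] // [<-]; rewrite -A.
set m := \max_(x <- _) x; set P := fun kc : nat * seq nat => _.
have /activesP [j0 j0k [act0 m_last]] : m \in actives k cols.
  by apply: mem_bigmax_seq; rewrite A.
have hasP_zip : has P (zip k cols).
  apply/(has_nthP (0, [::])); exists j0; rewrite ?size_zip //.
  by rewrite nth_zip_cond size_zip j0k /P act0 -m_last eqxx.
have := nth_find (0, [::]) hasP_zip; have := hasP_zip; rewrite has_find size_zip.
set j := find P _ => jk; rewrite /P nth_zip_cond size_zip jk /= => /andP [act /eqP mj].
by exists j => //; split => // y yA; rewrite mj; exact: leq_bigmax_seq.
Qed.

Lemma place_belowE i cols j : j < minn (size k) (size cols) ->
  is_active (nth 0 k j, nth [::] cols j) ->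
  {in actives k cols, forall y, y <= last 0 (nth [::] cols j)} ->
  (forall j', j' < j -> is_active (nth 0 k j', nth [::] cols j') ->
     last 0 (nth [::] cols j') != last 0 (nth [::] cols j)) ->
  place_below k i cols = Some (set_nth [::] cols j (rcons (nth [::] cols j) i)).
Proof.
move=> jk act maxj before; have jA := mem_actives jk act.
have max_last : \max_(x <- actives k cols) x = last 0 (nth [::] cols j).
  apply/eqP; rewrite eqn_leq; apply/andP; split.
    by apply/bigmax_leqP_seq => y yA _; exact: maxj.
  exact: leq_bigmax_seq.
rewrite /place_below max_last; case: (actives k cols) jA => // _ _ _.
rewrite (@find_nth_first _ _ _ (0, [::]) j) ?size_zip //.
  by rewrite nth_zip_cond size_zip jk act eqxx.
move=> j' j'j; rewrite nth_zip_cond size_zip (ltn_trans j'j jk) /=.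
by apply/negP => /andP [act' /eqP]; apply/eqP/before.
Qed.

Definition step (x : letter) (i : nat) cols :=
  if x is None then place_below k i cols else place_top i cols.

Lemma step_append x i cols cols' : step x i cols = Some cols' ->
  exists2 j, j < size cols & cols' = set_nth [::] cols j (rcons (nth [::] cols j) i).
Proof.
case: x => [a|] /=; first by case/place_topP=> j js [colj ->]; exists j; rewrite ?colj.
by case/place_belowP=> j jk [_ _ ->]; exists j => //; exact: leq_trans jk (geq_minr _ _).
Qed.

Lemma step_restrict x d cols cols' : step x d cols = Some cols' -> restrict cols d = cols ->
  restrict cols' d = cols /\ restrict cols' d.+1 = cols'.
Proof.
case/step_append=> j js -> bounded.
have boundedS : restrict cols d.+1 = cols.
  by rewrite -{1}bounded restrict_restrict (minn_idPl (leqnSn d)).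
have col_lt t e :
    restrict cols e = cols -> [seq y <- nth [::] cols t | y < e] = nth [::] cols t.
  by rewrite -nth_restrict => ->.
have size_set : size (set_nth [::] cols j (rcons (nth [::] cols j) d)) = size cols.
  by rewrite size_set_nth; apply/maxn_idPr.
split; apply: (@eq_from_nth _ [::]); rewrite ?size_restrict ?size_set // => t _.
  rewrite nth_restrict !nth_set_nth /=; have [-> | _] := eqVneq t j; last exact: col_lt.
  by rewrite filter_rcons ltnn col_lt.
rewrite nth_restrict !nth_set_nth /=; have [_ | _] := eqVneq t j; last exact: col_lt.
by rewrite filter_rcons ltnSn col_lt.
Qed.

Lemma run_snapshots w i cols G : run k w i cols = Some G -> restrict cols i = cols ->
  [/\ cols = restrict G i, restrict G (i + size w) = G &
      forall d, i <= d < i + size w ->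
        step (nth None w (d - i)) d (restrict G d) = Some (restrict G d.+1)].
Proof.
elim: w i cols => [|x w IH] i cols /=.
  by move=> [<-] bounded; rewrite addn0 bounded; split => // d; lia.
case E: (if x is None then _ else _) => [cols'|] // run' bounded.
have [restr' bounded'] := step_restrict E bounded.
have [cols'G GB steps] := IH _ _ run' bounded'.
have colsG : cols = restrict G i.
  by rewrite -restr' cols'G restrict_restrict (minn_idPr (leqnSn i)).
split => //; first by rewrite addnS -addSn.
move=> d /andP [id dB]; case: (ltngtP i d) id => // [lt_id | <-] _.
  by have := steps d; rewrite (_ : d - i = (d - i.+1).+1) /=; [apply; lia | lia].
by rewrite subnn /= -colsG -cols'G.
Qed.

Lemma run_from_snapshots w i G :
  (forall d, i <= d < i + size w ->
     step (nth None w (d - i)) d (restrict G d) = Some (restrict G d.+1)) ->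
  run k w i (restrict G i) = Some (restrict G (i + size w)).
Proof.
elim: w i => [|x w IH] i /= steps; first by rewrite addn0.
have := steps i; rewrite leqnn addnS ltnS leq_addr subnn => /(_ isT); rewrite /step => ->.
rewrite -addSn; apply: IH => d di.
by have := steps d; rewrite (_ : d - i = (d - i.+1).+1) /=; [apply; lia | lia].
Qed.

End FillingSteps.

Definition nested_gaps (F : seq (seq nat)) : Prop :=
  forall c c', c \in F -> c' \in F -> forall r b e, r.+1 < size c ->
    b \in c' -> e \in c' -> nth 0 c r < b < nth 0 c r.+1 -> e < nth 0 c r.+1.

Definition tableau_letter (F : seq (seq nat)) (x : nat) : letter :=
  if x \in map (head 0) F then Some (index x (map (head 0) F)) else None.

Definition tableau_word (F : seq (seq nat)) : seq letter :=
  map (tableau_letter F) (iota 1 (size (flatten F))).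

Lemma count_leq_iota1 i n : i <= n -> count (fun x => x <= i) (iota 1 n) = i.
Proof.
move=> i_n; rewrite -(subnKC i_n) iotaD count_cat (eq_in_count (a2 := predT)); last first.
  by move=> x; rewrite mem_iota /= add1n ltnS => /andP [].
rewrite count_predT size_iota (eq_in_count (a2 := pred0)) ?count_pred0 ?addn0 // => x.
by rewrite mem_iota add1n ltnNge => /andP [/negbTE].
Qed.

Lemma sumz_sub1 (s : seq nat) (f : nat -> nat) :
  (\sum_(x <- s) ((f x)%:Z - 1) = (\sum_(x <- s) f x)%N%:Z - (size s)%:Z)%R.
Proof. by elim: s => [|x s IH]; rewrite ?big_nil // !big_cons IH /=; lia. Qed.

Section Tableau.
Variables (k : seq nat) (F : seq (seq nat)).
Hypothesis tabF : is_tableau k F.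

Local Notation N := (sumn k + size k).
Local Notation col j := (nth [::] F j).
Local Notation heads := (map (head 0) F).

Let size_F : size F = size k. Proof. by case: tabF. Qed.

Let size_col j : j < size F -> size (col j) = (nth 0 k j).+1.
Proof. by case: tabF => sF + _ _ _; rewrite -sF; apply. Qed.

Let perm_F : perm_eq (flatten F) (iota 1 N). Proof. by case: tabF. Qed.

Let sorted_heads : sorted ltn heads. Proof. by case: tabF. Qed.

Let sorted_mem c : c \in F -> sorted ltn c.
Proof. by case: tabF => _ _ _ _ /allP; apply. Qed.

Lemma size_tableau : size (flatten F) = N.
Proof. by rewrite (perm_size perm_F) size_iota. Qed.

Lemma sorted_col j : sorted ltn (col j).
Proof. by case: (ltnP j (size F)) => jF; [apply/sorted_mem/mem_nth | rewrite nth_default]. Qed.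

Lemma mem_tableau x : (x \in flatten F) = (0 < x <= N).
Proof. by rewrite (perm_mem perm_F) mem_iota add1n ltnS. Qed.

Lemma uniq_tableau : uniq (flatten F).
Proof. by rewrite (perm_uniq perm_F) iota_uniq. Qed.

Lemma col_inj i j x : x \in col i -> x \in col j -> i = j.
Proof. exact: uniq_flatten_nth_inj uniq_tableau. Qed.

Lemma mem_col_ltn j x : x \in col j -> j < size F.
Proof. by case: ltnP => // jF; rewrite nth_default. Qed.

Lemma mem_col_tableau j x : x \in col j -> x \in flatten F.
Proof. by move=> xj; apply/flattenP; exists (col j); rewrite ?mem_nth ?(mem_col_ltn xj). Qed.

Lemma mem_tableau_col x : x \in flatten F -> exists2 j, j < size F & x \in col j.
Proof. by case/flattenP=> c /(nthP [::]) [j jF <-]; exists j. Qed.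

Lemma tableau_col_eq c c' x : c \in F -> c' \in F -> x \in c -> x \in c' -> c = c'.
Proof.
by move=> /(nthP [::]) [i _ <-] /(nthP [::]) [j _ <-] xi /(col_inj xi) ->.
Qed.

Lemma gap_condition_nested : gap_condition F -> nested_gaps F.
Proof.
move=> gap c c' cF c'F r b e rc bc' ec' /andP [ab bd]; rewrite ltnNge; apply/negP => de.
have [|cols [sub colsP]] := gap c cF r rc; first by rewrite /=; lia.
have /hasP [c'' c''cols bc''] : has (fun c' => b \in c') cols by rewrite -colsP ab bd.
have c''c' := tableau_col_eq (sub _ c''cols) c'F bc'' bc'; subst c''.
have : nth 0 c r < e < nth 0 c r.+1 by rewrite colsP; apply/hasP; exists c'.
by rewrite [e < _]ltnNge de andbF.
Qed.

Lemma nested_gap_condition : nested_gaps F -> gap_condition F.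
Proof.
move=> nest c cF r rc /=; set a := nth 0 c r; set d := nth 0 c r.+1 => _.
have c_sorted := sorted_mem cF.
have ac : a \in c by rewrite mem_nth // ltnW.
exists [seq c' <- F | has (fun x => a < x < d) c']; split=> [c' | x].
  by rewrite mem_filter => /andP [].
apply/idP/hasP => [xad | [c' /[!mem_filter] /andP [/hasP [y yc' yad] c'F] xc']].
  have dF : d \in flatten F by apply/flattenP; exists c; rewrite ?mem_nth.
  have : x \in flatten F by move: dF; rewrite !mem_tableau; lia.
  case/flattenP=> c' c'F xc'; exists c' => //.
  by rewrite mem_filter c'F andbT; apply/hasP; exists x.
have -> /= := nest c c' cF c'F r y x rc yc' xc' yad; rewrite andbT ltnNge; apply/negP => xa.
have ac' : a \notin c'.
  apply/negP => ac'; rewrite -(tableau_col_eq cF c'F ac ac') in yc'.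
  case/andP: yad => ay yd; have := sorted_adjacent c_sorted rc yc'.
  by rewrite -/a -/d leqNgt ay leqNgt yd.
have xa' : x < a by rewrite ltn_neqAle xa andbT; apply: contraNneq ac' => <-.
have [|r' r'c' /and3P [lt_a a_lt d_le]] := sorted_straddle (sorted_mem c'F) xc' yc' _ ac'.
  by rewrite xa'; case/andP: yad.
have := nest c' c c'F cF r' a d r'c' ac (mem_nth 0 rc).
by rewrite lt_a a_lt => /(_ isT); case/andP: yad => _; lia.
Qed.

Lemma restrict_tableau_1 : restrict F 1 = nseq (size k) [::].
Proof.
apply: (@eq_from_nth _ [::]) => [|j]; rewrite size_restrict ?size_nseq // => jF.
rewrite nth_restrict nth_nseq -size_F jF filter_eq_nil // => x /mem_col_tableau.
by rewrite mem_tableau /= ltnNge => /andP [].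
Qed.

Lemma restrict_tableau_top : restrict F N.+1 = F.
Proof.
rewrite /restrict -[RHS]map_id; apply/eq_in_map => c cF /=; apply/all_filterP/allP => x xc.
have : x \in flatten F by apply/flattenP; exists c.
by rewrite mem_tableau ltnS => /andP [].
Qed.

Lemma is_active_restrict j d : j < size F ->
  is_active (nth 0 k j, [seq x <- col j | x < d]) =
  has (fun x => x < d) (col j) && has (fun x => d <= x) (col j).
Proof.
move=> jF; rewrite /is_active /= -size_col // size_filter -has_count; congr (_ && _).
rewrite -(count_predC (fun x => x < d)) -{1}[count _ _]addn0 ltn_add2l -has_count.
by apply: eq_has => x /=; rewrite -leqNgt.
Qed.

Lemma mem_actives_restrict j d : j < size F ->
  has (fun x => x < d) (col j) -> has (fun x => d <= x) (col j) ->
  last 0 [seq x <- col j | x < d] \in actives k (restrict F d).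
Proof.
move=> jF below above; rewrite -nth_restrict; apply: mem_actives.
  by rewrite size_restrict size_F minnn -size_F.
by rewrite nth_restrict is_active_restrict // below.
Qed.

Lemma actives_restrictP d y : y \in actives k (restrict F d) ->
  exists2 j, [/\ j < size F, y \in col j & y < d] & has (fun x => d <= x) (col j).
Proof.
case/activesP=> j; rewrite size_restrict size_F minnn -size_F => jF.
rewrite nth_restrict is_active_restrict // => -[/andP [/hasP [b bj bd] above] ->].
have /(mem_last_nonnil 0) : b \in [seq x <- col j | x < d] by rewrite mem_filter bd.
by rewrite mem_filter => /andP [lt_d mem_j]; exists j.
Qed.

Lemma restrictS_col j d : d \in col j ->
  restrict F d.+1 = set_nth [::] (restrict F d) j (rcons [seq x <- col j | x < d] d).
Proof.
move=> dj; have jF := mem_col_ltn dj.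
apply: (@eq_from_nth _ [::]) => [|t].
  by rewrite size_set_nth !size_restrict; apply/esym/maxn_idPr.
rewrite size_restrict => tF; rewrite nth_set_nth /= !nth_restrict.
have [-> | tj] := eqVneq t j; first by rewrite filter_ltnS_sorted ?sorted_col.
apply: eq_in_filter => x xt; rewrite ltnS leq_eqVlt; case: eqVneq => // xd.
by rewrite xd in xt; case/negP: tj; rewrite (col_inj xt dj).
Qed.

Lemma restrictS_set_nth d j j0 z : d \in col j ->
  restrict F d.+1 = set_nth [::] (restrict F d) j0 z ->
  j0 = j /\ z = [seq x <- col j | x < d.+1].
Proof.
move=> dj /(congr1 (nth [::] ^~ j)); rewrite nth_set_nth /= !nth_restrict.
case: eqVneq => [<- <- // | _ E].
by have := mem_filter (fun x => x < d.+1) d (col j); rewrite E mem_filter ltnn ltnSn dj.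
Qed.

Lemma step_actives_le_above j r x : r.+1 < size (col j) ->
  let d := nth 0 (col j) r.+1 in
  step k x d (restrict F d) = Some (restrict F d.+1) ->
  {in actives k (restrict F d), forall y, y <= nth 0 (col j) r}.
Proof.
move=> rj d; have dj : d \in col j := mem_nth 0 rj.
have a_lt_d : nth 0 (col j) r < d := sorted_nth_ltn (sorted_col j) (ltnSn r) rj.
have a_new : nth 0 (col j) r \in [seq x <- col j | x < d.+1].
  by rewrite mem_filter ltnW ?mem_nth // ltnW.
case: x => [z | ] /=.
  case/place_topP=> j0 _ [_ /(restrictS_set_nth dj) [_ E]].
  by move: a_new; rewrite -E inE => /eqP a_d; rewrite a_d ltnn in a_lt_d.
case/place_belowP=> j0 _ [_ max_j0 /(restrictS_set_nth dj) [j0j _]].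
by move: max_j0; rewrite j0j nth_restrict last_filter_ltn_nth // sorted_col.
Qed.

Lemma eta_nested_gaps p : eta k p = Some F -> nested_gaps F.
Proof.
move=> etaF c c' /(nthP [::]) [j jF <-{c}] /(nthP [::]) [j' j'F <-{c'}].
move=> r b e rj bj' ej' /andP [ab bd].
rewrite ltnNge; apply/negP => de.
case: p etaF => [[eF] | x w etaF]; first by move: rj; rewrite -eF nth_nseq; case: ifP.
(* [eta] puts label 1 on top whatever the first letter is. *)
have run1 : run k (Some 0 :: w) 1 (nseq (size k) [::]) = Some F by [].
have empty1 : restrict (nseq (size k) [::]) 1 = nseq (size k) [::].
  by rewrite /restrict map_nseq.
have [_ bounded steps] := run_snapshots run1 empty1.
set d := nth 0 (col j) r.+1 in bd de.
have dB : d < 1 + size (Some 0 :: w).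
  by have := mem_nth 0 rj; rewrite -/d -bounded nth_restrict mem_filter => /andP [].
have d_range : 1 <= d < 1 + size (Some 0 :: w) by rewrite dB andbT (leq_ltn_trans (leq0n b) bd).
move: (step_actives_le_above rj (steps d d_range)) => /(_ _ (mem_actives_restrict j'F _ _)).
have last_b : b <= last 0 [seq x <- col j' | x < d].
  by apply: leq_last_sorted; [exact/sorted_filter/sorted_col/ltn_trans | rewrite mem_filter bd].
have below : has (fun x => x < d) (col j') by apply/hasP; exists b.
have above : has (fun x => d <= x) (col j') by apply/hasP; exists e.
by move=> /(_ below above) /(leq_trans last_b); rewrite leqNgt ab.
Qed.

Lemma head_col j : j < size F -> head 0 (col j) \in col j.
Proof. by move=> jF; rewrite -nth0 mem_nth // size_col. Qed.

Lemma place_top_head j : j < size F ->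
  let d := head 0 (col j) in place_top d (restrict F d) = Some (restrict F d.+1).
Proof.
move=> jF d; have dj : d \in col j := head_col jF.
have empty_j : [seq x <- col j | x < d] = [::].
  by apply: filter_eq_nil => x /(head_leq_sorted (sorted_col j)); rewrite -leqNgt.
rewrite (restrictS_col dj) empty_j; apply: place_topE; rewrite ?size_restrict ?nth_restrict //.
move=> j' j'j; rewrite nth_restrict -has_filter; apply/hasP; exists (head 0 (col j')).
  exact/head_col/(ltn_trans j'j).
have := sorted_nth_ltn sorted_heads j'j; rewrite size_map => /(_ jF).
by rewrite !(nth_map [::]) // (ltn_trans j'j).
Qed.

Lemma place_below_nested j r : nested_gaps F -> r.+1 < size (col j) ->
  let d := nth 0 (col j) r.+1 in
  place_below k d (restrict F d) = Some (restrict F d.+1).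
Proof.
move=> nest rj d; set a := nth 0 (col j) r.
have jF := mem_col_ltn (mem_nth 0 rj); have dj : d \in col j := mem_nth 0 rj.
have aj : a \in col j by rewrite mem_nth // ltnW.
have last_a : last 0 [seq x <- col j | x < d] = a by rewrite last_filter_ltn_nth ?sorted_col.
rewrite (restrictS_col dj) -nth_restrict; apply: place_belowE.
- by rewrite size_restrict size_F minnn -size_F.
- rewrite nth_restrict is_active_restrict //; apply/andP; split; apply/hasP; last by exists d.
  by exists a; rewrite // sorted_nth_ltn ?sorted_col.
- move=> y /actives_restrictP [j' [j'F yj' yd] /hasP [e ej' de]].
  rewrite nth_restrict last_a leqNgt; apply/negP => ay.
  have := nest _ _ (mem_nth [::] jF) (mem_nth [::] j'F) r y e rj yj' ej'.
  by rewrite -/a -/d ay yd ltnNge de => /(_ isT).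
- move=> j' j'j; rewrite !nth_restrict last_a is_active_restrict ?(ltn_trans j'j) //.
  case/andP=> /hasP [b bj' bd] _; apply: contraTneq j'j => last_j'.
  have : a \in [seq x <- col j' | x < d].
    by rewrite -last_j'; apply: (mem_last_nonnil 0 (y := b)); rewrite mem_filter bd.
  by rewrite mem_filter => /andP [_ /(col_inj aj) ->]; rewrite ltnn.
Qed.

Lemma step_tableau_letter d : nested_gaps F -> 0 < d <= N ->
  step k (tableau_letter F d) d (restrict F d) = Some (restrict F d.+1).
Proof.
move=> nest dN; rewrite -mem_tableau in dN; have [j jF dj] := mem_tableau_col dN.
rewrite /tableau_letter /step; case: ifP => [/(nthP 0) [j'] | dH].
  by rewrite size_map => j'F; rewrite (nth_map [::]) // => <-; exact: place_top_head.
move: dj dH => /(nthP 0) [[|r] rj <-]; last by move=> _; exact: place_below_nested.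
by rewrite nth0 (map_f (head 0) (mem_nth [::] jF)).
Qed.

Lemma eta_tableau_word : nested_gaps F -> eta k (tableau_word F) = Some F.
Proof.
move=> nest; have := @run_from_snapshots k (tableau_word F) 1 F.
rewrite /tableau_word size_tableau size_map size_iota add1n.
rewrite restrict_tableau_1 restrict_tableau_top => run_word.
have {run_word} : run k (map (tableau_letter F) (iota 1 N)) 1 (nseq (size k) [::]) = Some F.
  apply: run_word => d /andP [d_gt0 dN]; rewrite (nth_map 0) ?size_iota ?nth_iota; try lia.
  by rewrite subnKC //; apply: step_tableau_letter => //; rewrite d_gt0 -ltnS.
(* [eta] always starts with a top placement; a W-step would fail on the empty tableau anyway. *)
case: (iota 1 N) => [|x w] //=; case: (tableau_letter F x) => [j|] //=.
by rewrite /place_below actives_nil.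
Qed.

Lemma filter_iota_heads : [seq x <- iota 1 N | x \in heads] = heads.
Proof.
apply: (irr_sorted_eq ltn_trans ltnn); rewrite ?sorted_filter ?iota_ltn_sorted //.
  exact: ltn_trans.
move=> x; rewrite mem_filter; apply: andb_idr => /mapP [c /(nthP [::]) [j jF <-] ->].
by rewrite -(perm_mem perm_F); exact: mem_col_tableau (head_col jF).
Qed.

Lemma pmap_tableau_word : pmap id (tableau_word F) = iota 0 (size k).
Proof.
have -> : pmap id (tableau_word F) = map (index^~ heads) [seq x <- iota 1 N | x \in heads].
  rewrite /tableau_word size_tableau.
  by elim: (iota 1 N) => //= x s ->; rewrite /tableau_letter; case: ifP.
rewrite filter_iota_heads -size_F -(size_map (head 0)).
apply: (@eq_from_nth _ 0) => [|i]; rewrite size_map ?size_iota // => iF.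
rewrite (nth_map 0) // nth_iota // index_uniq //.
exact: sorted_uniq ltn_trans ltnn _ sorted_heads.
Qed.

Lemma count_W_tableau_word : count (pred1 None) (tableau_word F) = sumn k.
Proof.
rewrite /tableau_word size_tableau count_map (eq_count (a2 := predC (mem heads))) => [|x].
  have := count_predC (mem heads) (iota 1 N).
  by rewrite size_iota -size_filter filter_iota_heads size_map size_F; lia.
by rewrite /= /tableau_letter; case: ifP.
Qed.

Lemma kstep_tableau_letter x :
  kstep k (tableau_letter F x) = ((\sum_(c <- F | x == head 0 c) size c)%N%:Z - 1)%R.
Proof.
rewrite /tableau_letter; case: ifP => [/(nthP 0) [j] | xH] /=; last first.
  by rewrite big_hasC //; apply/hasPn => c cF; apply: contraFneq xH => ->; exact: map_f.
rewrite size_map => jF <-.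
have uniq_heads : uniq heads := sorted_uniq ltn_trans ltnn sorted_heads.
rewrite index_uniq ?size_map // (big_nth [::]) big_mkord (big_pred1 (Ordinal jF)) /=.
  by rewrite -[(k`_j)%R]/(nth 0 k j) size_col //; lia.
by move=> t; rewrite -(nth_map [::] 0) // nth_uniq ?size_map // eq_sym.
Qed.

Lemma leq_sum_headed_sizes i : i <= N ->
  i <= \sum_(x <- iota 1 i) \sum_(c <- F | x == head 0 c) size c.
Proof.
move=> iN; rewrite (exchange_big_dep predT) //=.
rewrite -{1}(count_leq_iota1 iN) -(permP perm_F) count_flatten sumnE big_map.
rewrite [leqLHS]big_seq [leqRHS]big_seq; apply: leq_sum => c cF.
rewrite big_const_seq iter_addn_0 count_uniq_mem ?iota_uniq //.
have [_ | head_i] := boolP (head 0 c \in iota 1 i); first by rewrite muln1 count_size.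
have /(nthP [::]) [j jF cj] := cF.
have : head 0 c \in flatten F by rewrite -cj; exact: mem_col_tableau (head_col jF).
rewrite mem_tableau; move: head_i; rewrite mem_iota => head_i head_N.
have head_gt : i < head 0 c by lia.
rewrite muln0 leqn0 -(count_pred0 c); apply/eqP/eq_in_count => y yc /=; apply/negbTE.
by rewrite -ltnNge; exact: leq_trans head_gt (head_leq_sorted (sorted_mem cF) yc).
Qed.

Lemma dyck_tableau_word : dyck k (tableau_word F).
Proof.
split; [exact: pmap_tableau_word | exact: count_W_tableau_word | move=> i].
rewrite /tableau_word /rank size_tableau size_map size_iota => iN.
rewrite -map_take take_iota (minn_idPl (ltnW iN)) big_map.
rewrite (eq_bigr _ (fun x _ => kstep_tableau_letter x)) sumz_sub1 size_iota.
by have := leq_sum_headed_sizes (ltnW iN); lia.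
Qed.

End Tableau.

Theorem lemma3p10 (k : seq nat) (F : seq (seq nat)) :
  all (fun x => 0 < x) k ->
  is_tableau k F ->
  (exists p : seq letter, dyck k p /\ eta k p = Some F) <-> gap_condition F.
Proof.
move=> _ tabF; split=> [[p [_ etaF]] | /(gap_condition_nested tabF) nest].
  exact/(nested_gap_condition tabF)/(eta_nested_gaps tabF etaF).
by exists (tableau_word F); split; [exact: dyck_tableau_word | exact: eta_tableau_word].
Qed.
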